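(* There is an absolute constant $C$ such that for every $n\ge 2$ and every family $\mathcal{F}$ of $n$ axis-parallel closed rectangles in the plane with intersection graph $G$, we have $\chi_{CF}^{cn}(G)\le C\log n$.
   Context: The intersection graph of $\mathcal{F}$ has vertex set $\mathcal{F}$, with distinct $R_1,R_2$ adjacent iff $R_1\cap R_2\neq\emptyset$. $\chi_{CF}^{cn}(G)$ is the minimum number of colors in a coloring of $V(G)$ such that for every vertex $v$, the closed neighborhood $N_G[v]=\{v\}\cup\{u:\{u,v\}\in E(G)\}$ contains a vertex whose color differs from the colors of all other vertices of $N_G[v]$. *)

From Stdlib Require Import Reals.
Open Scope R_scope.

Record rect := mkRect { rx1 : R; rx2 : R; ry1 : R; ry2 : R }.

Definition rect_wf (r : rect) : Prop := rx1 r <= rx2 r /\ ry1 r <= ry2 r.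

Definition in_rect (x y : R) (r : rect) : Prop :=
  rx1 r <= x <= rx2 r /\ ry1 r <= y <= ry2 r.

Definition rect_meet (r s : rect) : Prop :=
  exists x y, in_rect x y r /\ in_rect x y s.

(* A simple graph on vertex set {0,...,n-1} is given by a relation adj;
   closed neighbourhood of v. *)
Definition closed_nbhd (n : nat) (adj : nat -> nat -> Prop) (v u : nat) : Prop :=
  (u < n)%nat /\ (u = v \/ adj v u).

Definition cf_cn_coloring (n : nat) (adj : nat -> nat -> Prop) (k : nat)
  (c : nat -> nat) : Prop :=
  (forall v, (v < n)%nat -> (c v < k)%nat) /\
  (forall v, (v < n)%nat ->
     exists u, closed_nbhd n adj v u /\
       forall w, closed_nbhd n adj v w -> w <> u -> c w <> c u).

Definition is_chi_cf_cn (n : nat) (adj : nat -> nat -> Prop) (k : nat) : Prop :=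
  (exists c, cf_cn_coloring n adj k c) /\
  (forall k' c', cf_cn_coloring n adj k' c' -> (k <= k')%nat).

Definition rect_adj (F : nat -> rect) (i j : nat) : Prop :=
  i <> j /\ rect_meet (F i) (F j).

(* Replace the x-coordinates by their ranks, so that every x-projection becomes
   an integer interval [[a, b]] inside [[1, 2n + 1]], and give it the largest
   level l such that [[a, b]] contains a multiple of 2 ^ l.  Two meeting
   rectangles of the same level contain the same such multiple (otherwise a
   multiple of 2 ^ (l + 1) would lie in one of them), so each level splits into
   classes of rectangles crossing a common vertical line, and inside a class the
   intersection graph is the interval graph of the y-projections.  Interval
   graphs have conflict-free closed-neighbourhood colorings with three colors
   (color a greedy chain alternately 1 and 2, everything else 0), and disjoint
   palettes for the O(log n) levels give the bound. *)

From Stdlib Require Import Reals List Lia Lra Arith ClassicalEpsilon.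
Open Scope R_scope.

Lemma exists_argmin (f : nat -> R) (l : list nat) :
  l <> nil -> exists m, In m l /\ forall w, In w l -> f m <= f w.
Proof.
  induction l as [|a l IH]; intros Hl; [congruence|].
  destruct l as [|b l].
  - exists a; split; [now left|]. intros w [<-|[]]; lra.
  - destruct IH as [m [Hm Hmin]]; [discriminate|].
    destruct (Rle_dec (f a) (f m)).
    + exists a; split; [now left|]. intros w [<-|Hw]; [lra|]. specialize (Hmin w Hw); lra.
    + exists m; split; [now right|]. intros w [<-|Hw]; [lra|auto].
Qed.

Section IntervalColoring.

Variables lo hi : nat -> R.

Definition overlap (i j : nat) : Prop := lo i <= hi j /\ lo j <= hi i.

Definition cf_witness (S : list nat) (c : nat -> nat) (v u : nat) : Prop :=
  In u S /\ overlap v u /\ forall w, In w S -> overlap v w -> w <> u -> c w <> c u.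

Definition left_of (S : list nat) (t : R) : Prop := forall w, In w S -> t <= hi w.

(* Color 0 means "uncolored".  The colored intervals form a chain colored
   alternately 1, 2, and [beta] is the color of its first member: every
   interval starting before all right endpoints sees exactly one interval of
   color [beta]. *)
Record chain_coloring (S : list nat) (c : nat -> nat) (beta : nat) : Prop := {
  chain_beta : (beta = 1 \/ beta = 2)%nat;
  chain_bound : forall w, (c w <= 2)%nat;
  chain_cf : forall v, In v S -> exists u, cf_witness S c v u /\ c u <> 0%nat;
  chain_front_colors : forall t, left_of S t ->
    forall w, In w S -> lo w <= t -> c w = 0%nat \/ c w = beta;
  chain_front_cf : forall t, left_of S t ->
    forall v, In v S -> lo v <= t -> exists u, cf_witness S c v u /\ c u = beta }.

Lemma chain_coloring_nil : chain_coloring nil (fun _ => 0%nat) 1.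
Proof. split; intros; simpl in *; tauto || lia. Qed.

Lemma exists_chain_head (S : list nat) :
  S <> nil -> (forall i, In i S -> lo i <= hi i) ->
  exists e, In e S /\ left_of S (lo e) /\
    forall w, In w S -> left_of S (lo w) -> hi w <= hi e.
Proof.
  intros HS Hwf.
  destruct (exists_argmin hi S HS) as [m [Hm Hmin]].
  set (C := filter (fun w => if Rle_dec (lo w) (hi m) then true else false) S).
  assert (HC : forall w, In w C <-> In w S /\ lo w <= hi m).
  { intros w. unfold C. rewrite filter_In.
    destruct Rle_dec; split; intros [? ?]; auto; easy. }
  destruct (exists_argmin (fun w => - hi w) C) as [e [He Hemax]].
  { intros HCnil. assert (Hm' : In m C) by (apply HC; auto). now rewrite HCnil in Hm'. }
  apply HC in He as [HeS Hlo]. exists e. split; [auto|split].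
  - intros w Hw. specialize (Hmin w Hw). lra.
  - intros w Hw Hleft. assert (HwC : In w C) by (apply HC; auto).
    specialize (Hemax w HwC). lra.
Qed.

Definition above (e : nat) (S : list nat) : list nat :=
  filter (fun w => if Rlt_dec (hi e) (hi w) then true else false) S.

Lemma in_above e S w : In w (above e S) <-> In w S /\ hi e < hi w.
Proof.
  unfold above. rewrite filter_In.
  destruct Rlt_dec; split; intros [? ?]; auto; easy.
Qed.

Lemma length_above e S : In e S -> (length (above e S) < length S)%nat.
Proof.
  intros He. pose proof (filter_length_le (fun w => if Rlt_dec (hi e) (hi w) then true else false) S).
  assert (length (above e S) <> length S); [|unfold above in *; lia].
  intros Heq. apply filter_length_forallb in Heq.
  rewrite forallb_forall in Heq. specialize (Heq e He).
  destruct Rlt_dec; [lra|discriminate].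
Qed.

Definition extend_coloring (S' : list nat) (e alpha : nat) (c : nat -> nat) (w : nat) : nat :=
  if in_dec Nat.eq_dec w S' then c w else if Nat.eq_dec w e then alpha else 0%nat.

Section ChainStep.

Variables (S : list nat) (e : nat) (c : nat -> nat) (beta : nat).
Hypothesis S_wf : forall i, In i S -> lo i <= hi i.
Hypothesis e_in : In e S.
Hypothesis e_left : left_of S (lo e).
Hypothesis e_max : forall w, In w S -> left_of S (lo w) -> hi w <= hi e.
Hypothesis c_chain : chain_coloring (above e S) c beta.

Let S' := above e S.
Let alpha := (3 - beta)%nat.
Let c' := extend_coloring S' e alpha c.

Lemma extend_coloring_e : c' e = alpha.
Proof.
  unfold c', extend_coloring. destruct in_dec as [He|_].
  - apply in_above in He. lra.
  - now destruct Nat.eq_dec.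
Qed.

Lemma extend_coloring_above w : In w S' -> c' w = c w.
Proof. intros Hw. unfold c', extend_coloring. now destruct in_dec. Qed.

Lemma extend_coloring_rest w : ~ In w S' -> w <> e -> c' w = 0%nat.
Proof.
  intros Hw Hwe. unfold c', extend_coloring.
  destruct in_dec; [contradiction|]. now destruct Nat.eq_dec.
Qed.

Lemma not_above_le w : In w S -> ~ In w S' -> hi w <= hi e.
Proof.
  intros Hw Hw'. destruct (Rle_dec (hi w) (hi e)) as [|Hlt]; auto.
  exfalso. apply Hw', in_above. split; auto; lra.
Qed.

Lemma left_of_above : left_of S' (hi e).
Proof. intros w Hw. apply in_above in Hw. lra. Qed.

Lemma beta_ne_alpha : beta <> alpha.
Proof. destruct (chain_beta _ _ _ c_chain); unfold alpha; lia. Qed.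

Lemma alpha_ne_0 : alpha <> 0%nat.
Proof. destruct (chain_beta _ _ _ c_chain); unfold alpha; lia. Qed.

Lemma e_witness v : In v S -> hi v <= hi e -> cf_witness S c' v e /\ c' e <> 0%nat.
Proof.
  intros Hv Hve. rewrite extend_coloring_e.
  split; [|apply alpha_ne_0].
  split; [auto|split].
  - pose proof (S_wf v Hv). pose proof (e_left v Hv). split; lra.
  - intros w Hw [Hwv Hvw] Hwe. rewrite extend_coloring_e.
    destruct (in_dec Nat.eq_dec w S') as [HwS'|HwS'].
    + rewrite extend_coloring_above by auto.
      assert (Hlw : lo w <= hi e) by lra.
      destruct (chain_front_colors _ _ _ c_chain (hi e) left_of_above w HwS' Hlw) as [->| ->].
      * apply not_eq_sym, alpha_ne_0.
      * apply beta_ne_alpha.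
    + rewrite extend_coloring_rest by auto. apply not_eq_sym, alpha_ne_0.
Qed.

Lemma lift_witness v u :
  cf_witness S' c v u ->
  (forall w, In w S -> ~ In w S' -> overlap v w -> c' w <> c u) ->
  cf_witness S c' v u.
Proof.
  intros [Hu [Hvu Huniq]] Hrest. split; [now apply in_above in Hu|split; [auto|]].
  rewrite extend_coloring_above by auto.
  intros w Hw Hvw Hwu. destruct (in_dec Nat.eq_dec w S') as [HwS'|HwS'].
  - rewrite extend_coloring_above by auto. auto.
  - auto.
Qed.

Lemma extend_coloring_cf v : In v S -> exists u, cf_witness S c' v u /\ c' u <> 0%nat.
Proof.
  intros Hv. destruct (in_dec Nat.eq_dec v S') as [HvS'|HvS'];
    [|exists e; apply e_witness, not_above_le; auto].
  destruct (Rle_dec (lo v) (hi e)) as [Hle|Hgt].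
  - destruct (chain_front_cf _ _ _ c_chain (hi e) left_of_above v HvS' Hle) as [u [Hu Hcu]].
    exists u. split.
    + apply lift_witness; auto. intros w Hw HwS' _. rewrite Hcu.
      destruct (Nat.eq_dec w e) as [->|Hwe].
      * rewrite extend_coloring_e. apply not_eq_sym, beta_ne_alpha.
      * rewrite extend_coloring_rest by auto.
        destruct (chain_beta _ _ _ c_chain); lia.
    + rewrite extend_coloring_above by (now destruct Hu). rewrite Hcu.
      destruct (chain_beta _ _ _ c_chain); lia.
  - destruct (chain_cf _ _ _ c_chain v HvS') as [u [Hu Hcu]].
    exists u. split.
    + apply lift_witness; auto. intros w Hw HwS' [Hlw Hlv].
      pose proof (not_above_le w Hw HwS'). lra.
    + rewrite extend_coloring_above by (now destruct Hu). auto.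
Qed.

Lemma front_below_e t w : left_of S t -> In w S -> lo w <= t -> hi w <= hi e.
Proof. intros Ht Hw Hlw. apply e_max; auto. intros x Hx. specialize (Ht x Hx). lra. Qed.

Lemma extend_coloring_front_colors t : left_of S t ->
  forall w, In w S -> lo w <= t -> c' w = 0%nat \/ c' w = alpha.
Proof.
  intros Ht w Hw Hlw. pose proof (front_below_e t w Ht Hw Hlw) as Hwe.
  assert (HwS' : ~ In w S') by (intros Hin; apply in_above in Hin; lra).
  destruct (Nat.eq_dec w e) as [->|Hne].
  - right. apply extend_coloring_e.
  - left. now apply extend_coloring_rest.
Qed.

Lemma extend_coloring_front_cf t : left_of S t ->
  forall v, In v S -> lo v <= t -> exists u, cf_witness S c' v u /\ c' u = alpha.
Proof.
  intros Ht v Hv Hlv. exists e. split; [|apply extend_coloring_e].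
  apply e_witness; auto. now apply (front_below_e t).
Qed.

End ChainStep.

Lemma chain_coloring_step S e c beta :
  (forall i, In i S -> lo i <= hi i) -> In e S -> left_of S (lo e) ->
  (forall w, In w S -> left_of S (lo w) -> hi w <= hi e) ->
  chain_coloring (above e S) c beta ->
  chain_coloring S (extend_coloring (above e S) e (3 - beta) c) (3 - beta).
Proof.
  intros Hwf He Hleft Hmax Hc. pose proof (chain_beta _ _ _ Hc) as Hbeta. split.
  - lia.
  - intros w. unfold extend_coloring.
    destruct in_dec; [apply (chain_bound _ _ _ Hc)|]. destruct Nat.eq_dec; lia.
  - exact (extend_coloring_cf S e c beta Hwf He Hleft Hc).
  - exact (extend_coloring_front_colors S e c beta Hmax).
  - exact (extend_coloring_front_cf S e c beta Hwf He Hleft Hmax Hc).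
Qed.

Lemma chain_coloring_exists S :
  (forall i, In i S -> lo i <= hi i) -> exists c beta, chain_coloring S c beta.
Proof.
  induction S as [S IH] using (well_founded_induction (well_founded_ltof _ (@length nat))).
  intros Hwf. destruct S as [|s S0]; [exists (fun _ => 0%nat), 1%nat; apply chain_coloring_nil|].
  destruct (exists_chain_head (s :: S0)) as [e [He [Hleft Hmax]]]; [discriminate|auto|].
  destruct (IH (above e (s :: S0))) as [c [beta Hc]].
  - now apply length_above.
  - intros i Hi. apply Hwf. now apply in_above in Hi.
  - exists (extend_coloring (above e (s :: S0)) e (3 - beta) c), (3 - beta)%nat.
    now apply chain_coloring_step.
Qed.

Theorem interval_cf_coloring S :
  (forall i, In i S -> lo i <= hi i) ->
  exists c, (forall w, (c w <= 2)%nat) /\ forall v, In v S -> exists u, cf_witness S c v u.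
Proof.
  intros Hwf. destruct (chain_coloring_exists S Hwf) as [c [beta Hc]].
  exists c. split; [apply (chain_bound _ _ _ Hc)|].
  intros v Hv. destruct (chain_cf _ _ _ Hc v Hv) as [u [Hu _]]. eauto.
Qed.

End IntervalColoring.

Section DyadicLevels.

Local Open Scope nat_scope.

Lemma pow2_neq0 l : 2 ^ l <> 0.
Proof. apply Nat.pow_nonzero; lia. Qed.

Lemma div_mul_le b d : b / d * d <= b.
Proof. rewrite Nat.mul_comm. apply Nat.Div0.mul_div_le. Qed.

Lemma mul_le_div_mul s b d : d <> 0 -> s * d <= b -> s * d <= b / d * d.
Proof.
  intros Hd Hsb. apply Nat.mul_le_mono_r, Nat.div_le_lower_bound; lia.
Qed.

(* The largest [l <= K] such that [b / 2 ^ l * 2 ^ l], the largest multiple of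
   [2 ^ l] below [b], is at least [a]; that is, the highest dyadic scale at which
   [[a, b]] contains a grid point. *)
Fixpoint dyadic_level (a b K : nat) : nat :=
  match K with
  | O => O
  | S K' => if a <=? b / 2 ^ K * 2 ^ K then K else dyadic_level a b K'
  end.

Lemma dyadic_level_spec a b K :
  a <= b -> a <= b / 2 ^ dyadic_level a b K * 2 ^ dyadic_level a b K.
Proof.
  intros Hab. induction K as [|K IH]; cbn [dyadic_level].
  - rewrite Nat.pow_0_r, Nat.div_1_r. lia.
  - destruct (Nat.leb_spec a (b / 2 ^ S K * 2 ^ S K)); auto.
Qed.

Lemma dyadic_level_maximal a b K j :
  dyadic_level a b K < j <= K -> b / 2 ^ j * 2 ^ j < a.
Proof.
  induction K as [|K IH]; cbn [dyadic_level]; intros Hj; [lia|].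
  destruct (Nat.leb_spec a (b / 2 ^ S K * 2 ^ S K)) as [_|Hlt]; [lia|].
  destruct (Nat.eq_dec j (S K)) as [->|Hne]; [exact Hlt|apply IH; lia].
Qed.

Lemma multiple_le_dyadic_level a b K s j :
  a <= s * 2 ^ j <= b -> j <= K -> j <= dyadic_level a b K.
Proof.
  intros Hs HjK. destruct (Nat.le_gt_cases j (dyadic_level a b K)) as [|Hgt]; auto.
  pose proof (dyadic_level_maximal a b K j (conj Hgt HjK)).
  pose proof (mul_le_div_mul s b (2 ^ j) (pow2_neq0 j) (proj2 Hs)). lia.
Qed.

Lemma pow2_dyadic_level_le a b K : 1 <= a <= b -> 2 ^ dyadic_level a b K <= b.
Proof.
  intros Hab. pose proof (dyadic_level_spec a b K (proj2 Hab)).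
  pose proof (div_mul_le b (2 ^ dyadic_level a b K)).
  set (P := 2 ^ dyadic_level a b K) in *. set (q := b / P) in *.
  assert (1 <= q) by (destruct q; lia). nia.
Qed.

Lemma dyadic_quotient_le a b b' K :
  a <= b -> b / 2 ^ dyadic_level a b K = b' / 2 ^ dyadic_level a b K -> a <= b'.
Proof.
  intros Hab Hq. pose proof (dyadic_level_spec a b K Hab).
  pose proof (div_mul_le b' (2 ^ dyadic_level a b K)). rewrite Hq in *. lia.
Qed.

(* Between two distinct grid points of scale [2 ^ l] lies one of scale
   [2 ^ (l + 1)], and it falls in one of two meeting intervals. *)
Lemma dyadic_quotient_not_lt a b a' b' K :
  a <= b -> a' <= b' -> a <= b' -> a' <= b -> b' < 2 ^ K ->
  dyadic_level a b K = dyadic_level a' b' K ->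
  ~ b / 2 ^ dyadic_level a b K < b' / 2 ^ dyadic_level a b K.
Proof.
  intros Hab Hab' Hab'' Ha'b HK Hl Hq.
  pose proof (dyadic_level_spec a b K Hab) as Ha.
  pose proof (dyadic_level_spec a' b' K Hab') as Ha'. rewrite <- Hl in Ha'.
  set (l := dyadic_level a b K) in *.
  pose proof (div_mul_le b (2 ^ l)). pose proof (div_mul_le b' (2 ^ l)).
  set (P := 2 ^ l) in *. set (q := b / P) in *. set (q' := b' / P) in *.
  assert (HlK : l < K).
  { apply (Nat.pow_lt_mono_r_iff 2); [lia|]. fold P. nia. }
  set (s := (q + 1) / 2).
  assert (Hs : q <= 2 * s <= q').
  { pose proof (Nat.div_mod_eq (q + 1) 2). pose proof (Nat.mod_upper_bound (q + 1) 2).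
    unfold s. lia. }
  assert (Hm : q * P <= s * 2 ^ S l <= q' * P) by (rewrite Nat.pow_succ_r'; fold P; nia).
  destruct (Nat.le_gt_cases (s * 2 ^ S l) b).
  - pose proof (multiple_le_dyadic_level a b K s (S l)). unfold l in *. lia.
  - pose proof (multiple_le_dyadic_level a' b' K s (S l)). rewrite <- Hl in *. unfold l in *. lia.
Qed.

Lemma dyadic_quotient_eq a b a' b' K :
  a <= b -> a' <= b' -> a <= b' -> a' <= b -> b < 2 ^ K -> b' < 2 ^ K ->
  dyadic_level a b K = dyadic_level a' b' K ->
  b / 2 ^ dyadic_level a b K = b' / 2 ^ dyadic_level a b K.
Proof.
  intros Hab Hab' Hab'' Ha'b HbK Hb'K Hl.
  destruct (Nat.lt_trichotomy (b / 2 ^ dyadic_level a b K) (b' / 2 ^ dyadic_level a b K))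
    as [Hlt|[Heq|Hgt]]; auto; exfalso.
  - exact (dyadic_quotient_not_lt a b a' b' K Hab Hab' Hab'' Ha'b Hb'K Hl Hlt).
  - rewrite Hl in Hgt. symmetry in Hl.
    exact (dyadic_quotient_not_lt a' b' a b K Hab' Hab Ha'b Hab'' HbK Hl Hgt).
Qed.

End DyadicLevels.

Definition rank (l : list R) (x : R) : nat :=
  length (filter (fun y => if Rlt_dec y x then true else false) l).

Lemma rank_le_mono l x y : x <= y -> (rank l x <= rank l y)%nat.
Proof.
  intros Hxy. unfold rank. induction l as [|z l IH]; simpl; [lia|].
  destruct (Rlt_dec z x), (Rlt_dec z y); simpl; lia || lra.
Qed.

Lemma rank_lt l x y : In x l -> x < y -> (rank l x < rank l y)%nat.
Proof.
  intros Hx Hxy. induction l as [|z l IH]; [destruct Hx|].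
  pose proof (rank_le_mono l x y (Rlt_le _ _ Hxy)). unfold rank in *. simpl.
  destruct Hx as [->|Hx].
  - destruct (Rlt_dec x x); [lra|]. destruct (Rlt_dec x y); [simpl; lia|lra].
  - specialize (IH Hx). destruct (Rlt_dec z x), (Rlt_dec z y); simpl; lia || lra.
Qed.

Lemma rank_le_length l x : (rank l x <= length l)%nat.
Proof. apply filter_length_le. Qed.

Lemma rank_le_inv l x y : In y l -> (rank l x <= rank l y)%nat -> x <= y.
Proof.
  intros Hy Hr. destruct (Rle_dec x y) as [|Hgt]; auto.
  pose proof (rank_lt l y x Hy (Rnot_le_lt _ _ Hgt)). lia.
Qed.

Lemma rect_meet_iff r s : rect_wf r -> rect_wf s ->
  rect_meet r s <->
  (rx1 r <= rx2 s /\ rx1 s <= rx2 r) /\ (ry1 r <= ry2 s /\ ry1 s <= ry2 r).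
Proof.
  intros [Hrx Hry] [Hsx Hsy]. split.
  - intros (x & y & [[? ?] [? ?]] & [[? ?] [? ?]]). lra.
  - intros [[? ?] [? ?]]. exists (Rmax (rx1 r) (rx1 s)), (Rmax (ry1 r) (ry1 s)).
    unfold in_rect. repeat split;
      solve [apply Rmax_l | apply Rmax_r | apply Rmax_lub; lra].
Qed.

(* Color [v] by [3 * lev v] plus an interval coloring of its class: equal
   colors force equal levels, and adjacent vertices of equal level share a
   class. *)
Lemma cf_coloring_by_levels (n L : nat) (adj : nat -> nat -> Prop)
    (lev q : nat -> nat) (lo hi : nat -> R) :
  (forall j, (j < n)%nat -> lo j <= hi j) ->
  (forall j, (j < n)%nat -> (lev j <= L)%nat) ->
  (forall v w, (v < n)%nat -> (w < n)%nat -> adj v w -> lev v = lev w -> q v = q w) ->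
  (forall v w, (v < n)%nat -> (w < n)%nat -> lev v = lev w -> q v = q w ->
     (adj v w -> overlap lo hi v w) /\ (v <> w -> overlap lo hi v w -> adj v w)) ->
  exists c, cf_cn_coloring n adj (3 * (L + 1)) c.
Proof.
  intros Hwf HL Hadj_q Hclass.
  set (cls := fun p : nat * nat =>
    filter (fun j => Nat.eqb (lev j) (fst p) && Nat.eqb (q j) (snd p))%bool (seq 0 n)).
  assert (Hcls : forall p j, In j (cls p) <-> (j < n)%nat /\ lev j = fst p /\ q j = snd p).
  { intros p j. unfold cls. rewrite filter_In, in_seq, Bool.andb_true_iff, !Nat.eqb_eq. lia. }
  destruct (choice (fun p (c : nat -> nat) => (forall w, (c w <= 2)%nat) /\
      forall v, In v (cls p) -> exists u, cf_witness lo hi (cls p) c v u)) as [col Hcol].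
  { intros p. apply interval_cf_coloring. intros i Hi. apply Hcls in Hi. apply Hwf; tauto. }
  exists (fun j => (3 * lev j + col (lev j, q j) j)%nat). split.
  - intros v Hv. pose proof (HL v Hv). pose proof (proj1 (Hcol (lev v, q v)) v). lia.
  - intros v Hv.
    destruct (proj2 (Hcol (lev v, q v)) v) as [u [Hu [Hvu Huniq]]]; [now apply Hcls|].
    apply Hcls in Hu as (Hun & Hlu & Hqu). simpl in Hlu, Hqu.
    exists u. split.
    + split; auto. destruct (Nat.eq_dec u v) as [|Hne]; [now left|right].
      apply (Hclass v u); auto.
    + intros w [Hw Hvw] Hwu Hcw.
      pose proof (proj1 (Hcol (lev w, q w)) w). pose proof (proj1 (Hcol (lev u, q u)) u).
      assert (Hlw : lev w = lev v) by lia.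
      assert (Hqw : q w = q v).
      { destruct Hvw as [->|Hvw]; [auto|symmetry; apply Hadj_q; auto]. }
      rewrite Hlw, Hqw, Hlu, Hqu in Hcw.
      apply (Huniq w); [apply Hcls; auto| |auto|lia].
      destruct Hvw as [->|Hvw]; [pose proof (Hwf v Hv); split; lra|].
      now apply (Hclass v w).
Qed.

Lemma rect_cf_coloring n (F : nat -> rect) :
  (forall i, (i < n)%nat -> rect_wf (F i)) ->
  exists c, cf_cn_coloring n (rect_adj F) (3 * (Nat.log2 (2 * n + 1) + 1)) c.
Proof.
  intros Hwf.
  set (E := map (fun j => rx1 (F j)) (seq 0 n) ++ map (fun j => rx2 (F j)) (seq 0 n)).
  set (a := fun j => S (rank E (rx1 (F j)))).
  set (b := fun j => S (rank E (rx2 (F j)))).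
  set (K := (2 * n + 1)%nat).
  set (lev := fun j => dyadic_level (a j) (b j) K).
  set (q := fun j => (b j / 2 ^ lev j)%nat).
  assert (Hb : forall j, (b j <= 2 * n + 1)%nat).
  { intros j. pose proof (rank_le_length E (rx2 (F j))).
    assert (length E = 2 * n)%nat by (unfold E; rewrite length_app, !length_map, length_seq; lia).
    unfold b. lia. }
  assert (HbK : forall j, (b j < 2 ^ K)%nat).
  { intros j. pose proof (Hb j). pose proof (Nat.pow_gt_lin_r 2 K). unfold K in *. lia. }
  assert (Hab_of : forall i j, rx1 (F i) <= rx2 (F j) -> (a i <= b j)%nat).
  { intros i j Hij. pose proof (rank_le_mono E _ _ Hij). unfold a, b. lia. }
  assert (Hab_to : forall i j, (j < n)%nat -> (a i <= b j)%nat -> rx1 (F i) <= rx2 (F j)).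
  { intros i j Hj Hij. apply (rank_le_inv E); [|unfold a, b in Hij; lia].
    apply in_or_app; right. apply (in_map (fun j => rx2 (F j))), in_seq. lia. }
  assert (Hab : forall j, (j < n)%nat -> (a j <= b j)%nat).
  { intros j Hj. apply Hab_of, Hwf, Hj. }
  assert (Hclass_x : forall i j, (i < n)%nat -> (j < n)%nat -> lev i = lev j -> q i = q j ->
            rx1 (F i) <= rx2 (F j)).
  { intros i j Hi Hj Hl Hq. apply Hab_to; auto.
    apply (dyadic_quotient_le (a i) (b i) (b j) K); [auto|].
    unfold q in Hq. rewrite <- Hl in Hq. exact Hq. }
  apply (cf_coloring_by_levels n _ (rect_adj F) lev q (fun j => ry1 (F j)) (fun j => ry2 (F j))).
  - intros j Hj. apply Hwf, Hj.
  - intros j Hj. apply Nat.log2_le_pow2; [lia|].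
    assert (1 <= a j)%nat by (unfold a; lia).
    pose proof (pow2_dyadic_level_le (a j) (b j) K). pose proof (Hb j). pose proof (Hab j Hj).
    unfold lev. lia.
  - intros v w Hv Hw [_ Hm] Hl.
    apply rect_meet_iff in Hm as [[Hvw Hwv] _]; try apply Hwf; auto.
    unfold q. rewrite <- Hl.
    apply (dyadic_quotient_eq (a v) (b v) (a w) (b w) K); auto.
  - intros v w Hv Hw Hl Hq.
    pose proof (Hclass_x v w Hv Hw Hl Hq). pose proof (Hclass_x w v Hw Hv (eq_sym Hl) (eq_sym Hq)).
    unfold rect_adj, overlap. rewrite rect_meet_iff by auto. tauto.
Qed.

Lemma log2_le_ln n : (1 <= n)%nat -> INR (Nat.log2 n) * ln 2 <= ln (INR n).
Proof.
  intros Hn. rewrite <- ln_pow by lra.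
  assert (Hpow : 2 ^ Nat.log2 n <= INR n).
  { replace 2 with (INR 2) by (simpl; lra). rewrite <- pow_INR.
    apply le_INR, Nat.log2_spec. lia. }
  assert (0 < 2 ^ Nat.log2 n) by (apply pow_lt; lra).
  destruct (Rle_lt_or_eq_dec _ _ Hpow) as [Hlt|Heq].
  - left. now apply ln_increasing.
  - right. now rewrite Heq.
Qed.

Lemma color_count_le_ln n :
  (2 <= n)%nat -> INR (3 * (Nat.log2 (2 * n + 1) + 1)) <= 18 * ln (INR n).
Proof.
  intros Hn. rewrite Nat.log2_succ_double by lia.
  set (L := Nat.log2 n).
  assert (HL : 1 <= INR L).
  { apply (le_INR 1). apply Nat.log2_le_pow2; [lia|]. simpl. lia. }
  assert (Hcount : INR (3 * (S L + 1)) = 3 * INR L + 6).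
  { rewrite mult_INR, plus_INR, (S_INR L), INR_1.
    replace (INR 3) with 3 by (simpl; lra). lra. }
  pose proof (log2_le_ln n ltac:(lia)) as Hln. fold L in Hln.
  pose proof ln_lt_2.
  assert (0 <= INR L * (ln 2 - / 2)) by (apply Rmult_le_pos; lra).
  lra.
Qed.

Theorem theorem1p6 :
  exists C : R,
    forall (n : nat) (F : nat -> rect),
      (2 <= n)%nat ->
      (forall i, (i < n)%nat -> rect_wf (F i)) ->
      (forall i j, (i < n)%nat -> (j < n)%nat -> F i = F j -> i = j) ->
      forall k : nat, is_chi_cf_cn n (rect_adj F) k ->
        INR k <= C * ln (INR n).
Proof.
  exists 18. intros n F Hn Hwf _ k [_ Hmin].
  destruct (rect_cf_coloring n F Hwf) as [c Hc].
  apply Rle_trans with (INR (3 * (Nat.log2 (2 * n + 1) + 1))).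
  - apply le_INR, (Hmin _ _ Hc).
  - now apply color_count_le_ln.
Qed.
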